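(* Let $n\ge2$, $s\ge n$ integers, $\Omega>0$, $0<\sigma<m_{\min}$, and let $\mu=\sum_{j=1}^n a_j\delta_{y_j}$ with pairwise distinct $y_j\in\big[-\frac{(n-1)\pi}{2\Omega},\frac{(n-1)\pi}{2\Omega}\big]$ and $\min_j|a_j|=m_{\min}$. For $t=1,\dots,2s+1$ let $z_t=-\Omega+\frac{t-1}{s}\Omega$ and $\mathbf Y(z_t)=\sum_{j=1}^n a_je^{iy_jz_t}+\mathbf W(z_t)$ with $|\mathbf W(z_t)|\le\sigma$. Let $\mathbf H(s)$ be the $(s+1)\times(s+1)$ Hankel matrix with entries $\mathbf H(s)_{p,q}=\mathbf Y(z_{p+q-1})$, $1\le p,q\le s+1$, and let $\hat\sigma_1\ge\dots\ge\hat\sigma_{s+1}$ be its singular values. Then $\hat\sigma_j\le(s+1)\sigma$ for $j=n+1,\dots,s+1$. Moreover, if $$\min_{p\ne j}|y_p-y_j|>\frac{\pi s}{\Omega}\Big(\frac{2n(s+1)}{\zeta(n)^2}\frac{\sigma}{m_{\min}}\Big)^{\frac{1}{2n-2}},$$ then $\hat\sigma_n>(s+1)\sigma$.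
   Context: For an integer $k\ge1$: $\zeta(k)=\big((\tfrac{k-1}{2})!\big)^2$ if $k$ is odd, $\zeta(k)=(\tfrac{k}{2})!(\tfrac{k-2}{2})!$ if $k$ is even. *)

From Stdlib Require Import Reals Arith.
Open Scope R_scope.

Definition cplx := (R * R)%type.
Definition C0 : cplx := (0, 0).
Definition C1 : cplx := (1, 0).
Definition RtoC (x : R) : cplx := (x, 0).
Definition Cadd (u v : cplx) : cplx := (fst u + fst v, snd u + snd v).
Definition Cmul (u v : cplx) : cplx :=
  (fst u * fst v - snd u * snd v, fst u * snd v + snd u * fst v).
Definition Cconj (u : cplx) : cplx := (fst u, - snd u).
Definition Cnorm (u : cplx) : R := sqrt (fst u ^ 2 + snd u ^ 2).
Definition Cexpi (x : R) : cplx := (cos x, sin x).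

Fixpoint Csum (N : nat) (f : nat -> cplx) : cplx :=
  match N with
  | O => C0
  | S k => Cadd (Csum k f) (f k)
  end.

Definition cmat := nat -> nat -> cplx.
Definition mmul (N : nat) (A B : cmat) : cmat :=
  fun i j => Csum N (fun k => Cmul (A i k) (B k j)).
Definition adj (A : cmat) : cmat := fun i j => Cconj (A j i).
Definition unitary (N : nat) (U : cmat) : Prop :=
  forall i j, (i < N)%nat -> (j < N)%nat ->
    mmul N (adj U) U i j = if Nat.eqb i j then C1 else C0.

(* A = U diag(sig) V^*, with U, V unitary and
   sig 0 >= sig 1 >= ... >= sig (N-1) >= 0 : a singular value
   decomposition; sig k is the (k+1)-th largest singular value of A. *)
Definition is_svd (N : nat) (A U : cmat) (sig : nat -> R) (V : cmat) : Prop :=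
  unitary N U /\ unitary N V /\
  (forall k, (k < N)%nat -> 0 <= sig k) /\
  (forall k, (S k < N)%nat -> sig (S k) <= sig k) /\
  (forall i j, (i < N)%nat -> (j < N)%nat ->
     A i j = Csum N (fun k => Cmul (Cmul (U i k) (RtoC (sig k))) (Cconj (V j k)))).

Definition zeta (k : nat) : R :=
  if Nat.odd k then (INR (fact ((k - 1) / 2))) ^ 2
  else INR (fact (k / 2)) * INR (fact ((k - 2) / 2)).

(* sampling points z_t, t = 1..2s+1 (1-based as in the paper) *)
Definition zpt (Omega : R) (s t : nat) : R :=
  - Omega + (INR t - 1) / INR s * Omega.

(* noiseless model: sum_{j=1}^n a_j e^{i y_j z}  (a, y are 0-based) *)
Definition model (n : nat) (a : nat -> cplx) (y : nat -> R) (z : R) : cplx :=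
  Csum n (fun j => Cmul (a j) (Cexpi (y j * z))).

(* Hankel matrix, 0-based entries: H p q = Y(z_{p+q+1}) (1-based t = p+q+1,
   matching H_{p,q} = Y(z_{p+q-1}) for 1-based p,q). *)
Definition hankel (Y : nat -> cplx) : cmat := fun p q => Y (p + q + 1)%nat.

(* With [h = Omega / s], the noiseless Hankel matrix is [H0 = sum_j a_j e^(-i y_j Omega) v_j v_j^T]
   with [v_j = (e^(i y_j h q))_q], so it vanishes on the vectors orthogonal to the [conj v_j],
   while the noise Hankel matrix has entries bounded by [sigma] and hence operator norm at most
   [(s+1) sigma].  For [j >= n], the span of the first [j+1] right singular vectors meets that
   orthogonal complement, which gives the upper bound on the trailing singular values
   (Courant-Fischer).  For the lower bound, if [sig (n-1) <= (s+1) sigma], the span of the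
   [conj v_j] contains some [x] orthogonal to the first [n-1] right singular vectors, so that
   [|H0 x| <= 2 (s+1) sigma |x|].  Applying to an exponential sum the difference operators
   [prod_(k <> j) (S - e^(i y_k h))] isolates its [j]-th coefficient; together with
   [prod_(k <> j) |e^(i y_j h) - e^(i y_k h)| >= (2 R)^(n-1) zeta(n)], which follows from Jordan's
   inequality and the separation of the [y_j], this bounds both the coefficients of [x] and
   those of [H0 x] by [|x|], and the separation threshold makes the two bounds incompatible. *)

From Stdlib Require Import Reals Arith Lra Lia List Psatz Classical.
Open Scope R_scope.

(** * Complex arithmetic *)

Definition Copp (u : cplx) : cplx := (- fst u, - snd u).

Definition Csub (u v : cplx) : cplx := Cadd u (Copp v).

Definition Cnorm2 (u : cplx) : R := fst u * fst u + snd u * snd u.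

Definition Cinv (u : cplx) : cplx := (fst u / Cnorm2 u, - snd u / Cnorm2 u).

Lemma cplx_eq (u v : cplx) : fst u = fst v -> snd u = snd v -> u = v.
Proof. destruct u, v; simpl; intros; subst; reflexivity. Qed.

Ltac cplx_ring :=
  repeat match goal with u : cplx |- _ => destruct u end;
  unfold Cadd, Cmul, Copp, Csub, Cconj, C0, C1, RtoC, Cexpi, Cnorm2 in *; simpl;
  try (apply cplx_eq; simpl; ring).

Lemma Cring_theory : ring_theory C0 C1 Cadd Cmul Csub Copp (@eq cplx).
Proof. constructor; intros; cplx_ring. Qed.

Add Ring Cring : Cring_theory.

Lemma C1_neq_C0 : C1 <> C0.
Proof. intros E; injection E; lra. Qed.

Lemma Csub_eq_C0 u v : Csub u v = C0 -> u = v.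
Proof. intros H. transitivity (Cadd (Csub u v) v); [ring | rewrite H; ring]. Qed.

Lemma Cconj_add u v : Cconj (Cadd u v) = Cadd (Cconj u) (Cconj v).
Proof. cplx_ring. Qed.

Lemma Cconj_mul u v : Cconj (Cmul u v) = Cmul (Cconj u) (Cconj v).
Proof. cplx_ring. Qed.

Lemma Cconj_sub u v : Cconj (Csub u v) = Csub (Cconj u) (Cconj v).
Proof. cplx_ring. Qed.

Lemma Cconj_involutive u : Cconj (Cconj u) = u.
Proof. cplx_ring. Qed.

Lemma Cconj_C0 : Cconj C0 = C0.
Proof. cplx_ring. Qed.

Lemma Cnorm2_nonneg u : 0 <= Cnorm2 u.
Proof. unfold Cnorm2; nra. Qed.

Lemma Cnorm2_pos u : u <> C0 -> 0 < Cnorm2 u.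
Proof.
  intros Hu. destruct u as [p q]; unfold Cnorm2; simpl.
  destruct (Req_dec p 0), (Req_dec q 0); subst; try nra. contradiction.
Qed.

Lemma Cmul_Cinv u : u <> C0 -> Cmul u (Cinv u) = C1.
Proof.
  intros Hu. pose proof (Cnorm2_pos u Hu).
  destruct u as [p q]; unfold Cinv, Cmul, C1, Cnorm2 in *; simpl in *.
  apply cplx_eq; simpl; field; lra.
Qed.

Lemma Cnorm_sqrt u : Cnorm u = sqrt (Cnorm2 u).
Proof. unfold Cnorm, Cnorm2. f_equal. ring. Qed.

Lemma Cnorm_nonneg u : 0 <= Cnorm u.
Proof. apply sqrt_pos. Qed.

Lemma Cnorm2_Cnorm u : Cnorm2 u = Cnorm u ^ 2.
Proof. rewrite Cnorm_sqrt, pow2_sqrt; auto using Cnorm2_nonneg. Qed.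

Lemma Cnorm2_mul u v : Cnorm2 (Cmul u v) = Cnorm2 u * Cnorm2 v.
Proof. cplx_ring; ring. Qed.

Lemma Cnorm_mul u v : Cnorm (Cmul u v) = Cnorm u * Cnorm v.
Proof. rewrite !Cnorm_sqrt, Cnorm2_mul. apply sqrt_mult; apply Cnorm2_nonneg. Qed.

Lemma Cnorm2_conj u : Cnorm2 (Cconj u) = Cnorm2 u.
Proof. cplx_ring; ring. Qed.

Lemma Cnorm_conj u : Cnorm (Cconj u) = Cnorm u.
Proof. rewrite !Cnorm_sqrt, Cnorm2_conj. reflexivity. Qed.

Lemma Cnorm2_opp u : Cnorm2 (Copp u) = Cnorm2 u.
Proof. cplx_ring; ring. Qed.

Lemma Cnorm_opp u : Cnorm (Copp u) = Cnorm u.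
Proof. rewrite !Cnorm_sqrt, Cnorm2_opp. reflexivity. Qed.

Lemma Cnorm2_RtoC r : Cnorm2 (RtoC r) = r ^ 2.
Proof. unfold Cnorm2, RtoC; simpl; ring. Qed.

Lemma Cnorm_C0 : Cnorm C0 = 0.
Proof. rewrite Cnorm_sqrt. unfold Cnorm2, C0; simpl. rewrite Rmult_0_r, Rplus_0_r. apply sqrt_0. Qed.

Lemma Cconj_mul_self u : Cmul (Cconj u) u = RtoC (Cnorm2 u).
Proof. cplx_ring. Qed.

Lemma Cnorm2_add u v : Cnorm2 (Cadd u v) = Cnorm2 u + 2 * fst (Cmul (Cconj u) v) + Cnorm2 v.
Proof. cplx_ring; ring. Qed.

Lemma Re_Cconj_mul_le u v : fst (Cmul (Cconj u) v) <= Cnorm u * Cnorm v.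
Proof.
  rewrite !Cnorm_sqrt, <- sqrt_mult by apply Cnorm2_nonneg.
  destruct u as [p q], v as [p' q']; unfold Cmul, Cconj, Cnorm2; simpl.
  apply Rsqr_incr_0_var; [|apply sqrt_pos].
  pose proof (pow2_ge_0 (p * q' - q * p')).
  rewrite Rsqr_sqrt by nra. unfold Rsqr. nra.
Qed.

Lemma Cnorm_triangle u v : Cnorm (Cadd u v) <= Cnorm u + Cnorm v.
Proof.
  pose proof (Cnorm_nonneg u); pose proof (Cnorm_nonneg v).
  rewrite (Cnorm_sqrt (Cadd u v)). apply Rsqr_incr_0_var; [|lra].
  rewrite Rsqr_sqrt by apply Cnorm2_nonneg.
  rewrite Cnorm2_add, !Cnorm2_Cnorm. pose proof (Re_Cconj_mul_le u v). unfold Rsqr. nra.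
Qed.

Lemma Cexpi_add a b : Cexpi (a + b) = Cmul (Cexpi a) (Cexpi b).
Proof. unfold Cexpi, Cmul; simpl. rewrite cos_plus, sin_plus. apply cplx_eq; simpl; ring. Qed.

Lemma Cconj_Cexpi a : Cconj (Cexpi a) = Cexpi (- a).
Proof. unfold Cexpi, Cconj; simpl. rewrite cos_neg, sin_neg. reflexivity. Qed.

Lemma Cnorm2_Cexpi a : Cnorm2 (Cexpi a) = 1.
Proof. unfold Cnorm2, Cexpi; simpl. rewrite <- (sin2_cos2 a). unfold Rsqr. ring. Qed.

Lemma Cnorm_Cexpi a : Cnorm (Cexpi a) = 1.
Proof. rewrite Cnorm_sqrt, Cnorm2_Cexpi. apply sqrt_1. Qed.

(** * Finite sums *)

Lemma Csum_ext N f g : (forall k, (k < N)%nat -> f k = g k) -> Csum N f = Csum N g.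
Proof. induction N; intros H; simpl; auto. rewrite IHN, H by (intros; try apply H; lia). reflexivity. Qed.

Lemma Csum_add N f g : Csum N (fun k => Cadd (f k) (g k)) = Cadd (Csum N f) (Csum N g).
Proof. induction N; simpl. cplx_ring. rewrite IHN. ring. Qed.

Lemma Csum_mull N c f : Cmul c (Csum N f) = Csum N (fun k => Cmul c (f k)).
Proof. induction N; simpl. cplx_ring. rewrite <- IHN. ring. Qed.

Lemma Csum_mulr N c f : Cmul (Csum N f) c = Csum N (fun k => Cmul (f k) c).
Proof. induction N; simpl. cplx_ring. rewrite <- IHN. ring. Qed.

Lemma Csum_opp N f : Copp (Csum N f) = Csum N (fun k => Copp (f k)).
Proof. induction N; simpl. cplx_ring. rewrite <- IHN. ring. Qed.

Lemma Csum_conj N f : Cconj (Csum N f) = Csum N (fun k => Cconj (f k)).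
Proof. induction N; simpl. apply Cconj_C0. rewrite Cconj_add, IHN. reflexivity. Qed.

Lemma Csum_zero N f : (forall k, (k < N)%nat -> f k = C0) -> Csum N f = C0.
Proof. induction N; intros H; simpl; auto. rewrite IHN, H by (intros; try apply H; lia). ring. Qed.

Lemma Csum_swap N M f :
  Csum N (fun i => Csum M (fun j => f i j)) = Csum M (fun j => Csum N (fun i => f i j)).
Proof. induction N; simpl. symmetry; apply Csum_zero; auto. rewrite IHN, <- Csum_add. reflexivity. Qed.

Lemma Csum_delta N k f : (k < N)%nat ->
  Csum N (fun l => Cmul (if Nat.eqb k l then C1 else C0) (f l)) = f k.
Proof.
  induction N; intros Hk; [lia|]. simpl. destruct (Nat.eq_dec k N) as [->|Hne].
  - rewrite Nat.eqb_refl, Csum_zero; [ring|].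
    intros l Hl. destruct (Nat.eqb_spec N l); [lia|ring].
  - rewrite IHN by lia. destruct (Nat.eqb_spec k N); [lia|ring].
Qed.

Lemma Csum_single n j f : (j < n)%nat -> (forall i, (i < n)%nat -> i <> j -> f i = C0) -> Csum n f = f j.
Proof.
  intros Hj Hf. rewrite <- (Csum_delta n j f Hj). apply Csum_ext. intros i Hi.
  destruct (Nat.eqb_spec j i) as [->|Hne]; [ring | rewrite Hf by auto; ring].
Qed.

Lemma Csum_trunc N M f : (M <= N)%nat -> (forall k, (M <= k)%nat -> f k = C0) -> Csum N f = Csum M f.
Proof.
  intros HMN Hf. induction HMN; auto. simpl. rewrite IHHMN, (Hf m) by lia. ring.
Qed.

Lemma Csum_mul_Csum N M (u : nat -> cplx) (B : nat -> nat -> cplx) (c : nat -> cplx) :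
  Csum N (fun q => Cmul (u q) (Csum M (fun k => Cmul (B q k) (c k)))) =
  Csum M (fun k => Cmul (Csum N (fun q => Cmul (u q) (B q k))) (c k)).
Proof.
  transitivity (Csum N (fun q => Csum M (fun k => Cmul (Cmul (u q) (B q k)) (c k)))).
  - apply Csum_ext; intros q _. rewrite Csum_mull. apply Csum_ext; intros; ring.
  - rewrite Csum_swap. apply Csum_ext; intros k _. rewrite Csum_mulr. reflexivity.
Qed.

Lemma Csum_mul_sub_scal N u v l c :
  Csum N (fun k => Cmul (Csub (u k) (Cmul l (v k))) (c k)) =
  Csub (Csum N (fun k => Cmul (u k) (c k))) (Cmul l (Csum N (fun k => Cmul (v k) (c k)))).
Proof. unfold Csub. rewrite Csum_mull, Csum_opp, <- Csum_add. apply Csum_ext; intros; ring. Qed.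

Fixpoint Rsum (N : nat) (f : nat -> R) : R :=
  match N with O => 0 | S k => Rsum k f + f k end.

Lemma Rsum_ext N f g : (forall k, (k < N)%nat -> f k = g k) -> Rsum N f = Rsum N g.
Proof. induction N; intros H; simpl; auto. rewrite IHN, H by (intros; try apply H; lia). reflexivity. Qed.

Lemma Rsum_le N f g : (forall k, (k < N)%nat -> f k <= g k) -> Rsum N f <= Rsum N g.
Proof.
  induction N; intros H; simpl; [lra|].
  assert (Rsum N f <= Rsum N g) by (apply IHN; intros; apply H; lia).
  assert (f N <= g N) by (apply H; lia). lra.
Qed.

Lemma Rsum_lt N f g : (forall k, (k < N)%nat -> f k <= g k) ->
  (exists k, (k < N)%nat /\ f k < g k) -> Rsum N f < Rsum N g.
Proof.
  induction N; intros H [k [Hk Hlt]]; [lia|]. simpl.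
  assert (f N <= g N) by (apply H; lia).
  destruct (Nat.eq_dec k N) as [->|Hne].
  - assert (Rsum N f <= Rsum N g) by (apply Rsum_le; intros; apply H; lia). lra.
  - assert (Rsum N f < Rsum N g) by (apply IHN; [intros; apply H; lia | exists k; split; [lia|auto]]). lra.
Qed.

Lemma Rsum_add N f g : Rsum N (fun k => f k + g k) = Rsum N f + Rsum N g.
Proof. induction N; simpl. ring. rewrite IHN. ring. Qed.

Lemma Rsum_scal N c f : Rsum N (fun k => c * f k) = c * Rsum N f.
Proof. induction N; simpl. ring. rewrite IHN. ring. Qed.

Lemma Rsum_const N c : Rsum N (fun _ => c) = INR N * c.
Proof. induction N; simpl Rsum. simpl; ring. rewrite IHN, S_INR. ring. Qed.

Lemma Rsum_nonneg N f : (forall k, (k < N)%nat -> 0 <= f k) -> 0 <= Rsum N f.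
Proof.
  intros H. replace 0 with (Rsum N (fun _ => 0)) by (rewrite Rsum_const; ring).
  apply Rsum_le; auto.
Qed.

Lemma Rsum_term N f k : (forall i, (i < N)%nat -> 0 <= f i) -> (k < N)%nat -> f k <= Rsum N f.
Proof.
  intros H Hk. replace (f k) with (Rsum N (fun i => if Nat.eqb i k then f k else 0)).
  - apply Rsum_le. intros i Hi. destruct (Nat.eqb_spec i k); subst; [lra | apply H; auto].
  - clear H. induction N; [lia|]. simpl. destruct (Nat.eqb_spec N k) as [->|Hne].
    + rewrite (Rsum_ext _ _ (fun _ => 0)), Rsum_const; [ring|].
      intros i Hi. destruct (Nat.eqb_spec i k); [lia|auto].
    + rewrite IHN by lia. ring.
Qed.

Lemma fst_Csum N f : fst (Csum N f) = Rsum N (fun k => fst (f k)).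
Proof. induction N; simpl; auto. rewrite IHN. reflexivity. Qed.

Lemma Cnorm_Csum N f : Cnorm (Csum N f) <= Rsum N (fun k => Cnorm (f k)).
Proof.
  induction N; simpl. rewrite Cnorm_C0; lra.
  pose proof (Cnorm_triangle (Csum N f) (f N)). lra.
Qed.

Lemma Rsum_Cauchy_Schwarz N f g :
  (Rsum N (fun k => f k * g k)) ^ 2 <= Rsum N (fun k => f k ^ 2) * Rsum N (fun k => g k ^ 2).
Proof.
  induction N; cbn [Rsum]; [lra|].
  assert (0 <= Rsum N (fun k => f k ^ 2)) by (apply Rsum_nonneg; intros; apply pow2_ge_0).
  assert (0 <= Rsum N (fun k => g k ^ 2)) by (apply Rsum_nonneg; intros; apply pow2_ge_0).
  revert IHN H H0.
  generalize (Rsum N (fun k => f k ^ 2)) (Rsum N (fun k => g k ^ 2)) (Rsum N (fun k => f k * g k)) (f N) (g N).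
  intros A B C a b HC HA HB.
  assert (Hcross : 2 * C * (a * b) <= A * b ^ 2 + B * a ^ 2).
  { assert (Hsq : (2 * C * (a * b)) ^ 2 <= (A * b ^ 2 + B * a ^ 2) ^ 2).
    { assert (4 * C ^ 2 * (a * b) ^ 2 <= 4 * (A * B) * (a * b) ^ 2)
        by (apply Rmult_le_compat_r; [apply pow2_ge_0 | lra]).
      pose proof (pow2_ge_0 (A * b ^ 2 - B * a ^ 2)). nra. }
    apply Rsqr_incr_0_var; [unfold Rsqr; simpl in Hsq; lra | nra]. }
  replace ((C + a * b) ^ 2) with (C ^ 2 + 2 * C * (a * b) + (a * b) ^ 2) by ring.
  replace ((A + a ^ 2) * (B + b ^ 2)) with (A * B + (A * b ^ 2 + B * a ^ 2) + (a * b) ^ 2) by ring.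
  lra.
Qed.

Lemma sqrt_mul_lt_of_bounds B W X p q r r' : 0 <= B -> 0 <= W -> 0 < p -> 0 < q -> 0 < r -> 0 < r' ->
  r * r' <= p * q -> p * B < r * X -> q * W <= r' * X -> sqrt B * sqrt W < X.
Proof.
  intros HB HW Hp Hq Hr Hr' Hpq HBX HWX.
  assert (HX : 0 < X) by nra.
  rewrite <- sqrt_mult by auto. rewrite <- (sqrt_pow2 X) by lra. apply sqrt_lt_1_alt.
  split; [nra|]. simpl. rewrite Rmult_1_r.
  destruct (Req_dec W 0) as [->|HW0]; [nra|].
  assert (H1 : (r * r') * (B * W) <= (p * B) * (q * W)).
  { replace ((p * B) * (q * W)) with ((p * q) * (B * W)) by ring. apply Rmult_le_compat_r; nra. }
  assert (H2 : (p * B) * (q * W) < (r * X) * (q * W)) by (apply Rmult_lt_compat_r; nra).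
  assert (H3 : (r * X) * (q * W) <= (r * X) * (r' * X)) by (apply Rmult_le_compat_l; nra).
  apply (Rmult_lt_reg_l (r * r')); [nra|]. nra.
Qed.

(** * Vectors and unitary matrices *)

Definition vnorm2 (N : nat) (x : nat -> cplx) : R := Rsum N (fun k => Cnorm2 (x k)).

Definition cdot (N : nat) (u v : nat -> cplx) : cplx := Csum N (fun k => Cmul (Cconj (u k)) (v k)).

Definition Mv (N : nat) (M : cmat) (x : nat -> cplx) : nat -> cplx :=
  fun p => Csum N (fun k => Cmul (M p k) (x k)).

Definition lincomb (n : nat) (f : nat -> nat -> cplx) (b : nat -> cplx) : nat -> cplx :=
  fun q => Csum n (fun i => Cmul (f i q) (b i)).

Lemma vnorm2_nonneg N x : 0 <= vnorm2 N x.
Proof. apply Rsum_nonneg; intros; apply Cnorm2_nonneg. Qed.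

Lemma vnorm2_ext N x x' : (forall k, (k < N)%nat -> x k = x' k) -> vnorm2 N x = vnorm2 N x'.
Proof. intros H. apply Rsum_ext. intros k Hk. rewrite H; auto. Qed.

Lemma vnorm2_cdot N x : vnorm2 N x = fst (cdot N x x).
Proof. unfold vnorm2, cdot. rewrite fst_Csum. apply Rsum_ext; intros. rewrite Cconj_mul_self. reflexivity. Qed.

Lemma vnorm2_pos N x k : (k < N)%nat -> x k <> C0 -> 0 < vnorm2 N x.
Proof.
  intros Hk Hx. eapply Rlt_le_trans; [apply (Cnorm2_pos _ Hx)|].
  apply (Rsum_term N (fun k => Cnorm2 (x k))); auto using Cnorm2_nonneg.
Qed.

Lemma vnorm2_opp N x : vnorm2 N (fun k => Copp (x k)) = vnorm2 N x.
Proof. apply Rsum_ext; intros. apply Cnorm2_opp. Qed.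

Lemma Re_cdot_le N u v : fst (cdot N u v) <= sqrt (vnorm2 N u) * sqrt (vnorm2 N v).
Proof.
  unfold cdot. rewrite fst_Csum.
  apply Rle_trans with (Rsum N (fun k => Cnorm (u k) * Cnorm (v k))).
  { apply Rsum_le. intros. apply Re_Cconj_mul_le. }
  rewrite <- sqrt_mult by apply vnorm2_nonneg.
  apply Rsqr_incr_0_var; [|apply sqrt_pos].
  rewrite Rsqr_sqrt by (apply Rmult_le_pos; apply vnorm2_nonneg). unfold Rsqr.
  pose proof (Rsum_Cauchy_Schwarz N (fun k => Cnorm (u k)) (fun k => Cnorm (v k))) as HCS.
  unfold vnorm2. rewrite !(Rsum_ext N (fun k => Cnorm2 _) (fun k => Cnorm _ ^ 2))
    by (intros; apply Cnorm2_Cnorm).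
  simpl in HCS |- *. lra.
Qed.

Lemma vnorm2_add_le N u v :
  sqrt (vnorm2 N (fun k => Cadd (u k) (v k))) <= sqrt (vnorm2 N u) + sqrt (vnorm2 N v).
Proof.
  pose proof (sqrt_pos (vnorm2 N u)); pose proof (sqrt_pos (vnorm2 N v)).
  apply Rsqr_incr_0_var; [|lra]. rewrite Rsqr_sqrt by apply vnorm2_nonneg.
  assert (E : vnorm2 N (fun k => Cadd (u k) (v k)) = vnorm2 N u + 2 * fst (cdot N u v) + vnorm2 N v).
  { unfold vnorm2, cdot. rewrite fst_Csum, <- Rsum_scal, <- !Rsum_add.
    apply Rsum_ext. intros. apply Cnorm2_add. }
  rewrite E. pose proof (Re_cdot_le N u v). pose proof (sqrt_sqrt _ (vnorm2_nonneg N u)).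
  pose proof (sqrt_sqrt _ (vnorm2_nonneg N v)). unfold Rsqr. nra.
Qed.

Lemma vnorm2_sub_le N u v e X : 0 <= e -> 0 <= X ->
  vnorm2 N u <= e ^ 2 * X -> vnorm2 N v <= e ^ 2 * X ->
  vnorm2 N (fun k => Csub (u k) (v k)) <= 4 * e ^ 2 * X.
Proof.
  intros He HX Hu Hv.
  assert (Hsq : forall z, z <= e ^ 2 * X -> sqrt z <= e * sqrt X).
  { intros z Hz. rewrite <- (sqrt_pow2 e He), <- sqrt_mult by (try apply pow2_ge_0; auto).
    apply sqrt_le_1_alt. auto. }
  pose proof (vnorm2_add_le N u (fun k => Copp (v k))) as Htri. rewrite vnorm2_opp in Htri.
  pose proof (Hsq _ Hu). pose proof (Hsq _ Hv).
  rewrite <- (pow2_sqrt (vnorm2 N _)) by apply vnorm2_nonneg.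
  replace (4 * e ^ 2 * X) with ((2 * e * sqrt X) ^ 2)
    by (rewrite Rpow_mult_distr, pow2_sqrt by auto; ring).
  apply pow_incr. split; [apply sqrt_pos | unfold Csub; lra].
Qed.

Lemma cdot_lincomb_l N n f b z :
  cdot N (lincomb n f b) z = cdot n b (fun i => cdot N (f i) z).
Proof.
  unfold cdot, lincomb.
  transitivity (Csum N (fun q => Csum n (fun i => Cmul (Cconj (b i)) (Cmul (Cconj (f i q)) (z q))))).
  - apply Csum_ext; intros q _. rewrite Csum_conj, Csum_mulr.
    apply Csum_ext; intros. rewrite Cconj_mul. ring.
  - rewrite Csum_swap. apply Csum_ext; intros i _. rewrite Csum_mull. reflexivity.
Qed.

Lemma Mv_entry_bound N E sigma x : 0 <= sigma ->
  (forall p q, (p < N)%nat -> (q < N)%nat -> Cnorm (E p q) <= sigma) ->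
  vnorm2 N (Mv N E x) <= (INR N * sigma) ^ 2 * vnorm2 N x.
Proof.
  intros Hsigma HE.
  assert (Hrow : forall p, (p < N)%nat -> Cnorm2 (Mv N E x p) <= INR N * sigma ^ 2 * vnorm2 N x).
  { intros p Hp. unfold Mv. rewrite Cnorm2_Cnorm.
    set (L := Rsum N (fun k => Cnorm (x k))).
    assert (H1 : Cnorm (Csum N (fun k => Cmul (E p k) (x k))) <= sigma * L).
    { eapply Rle_trans; [apply Cnorm_Csum|]. unfold L. rewrite <- Rsum_scal. apply Rsum_le.
      intros k Hk. rewrite Cnorm_mul. apply Rmult_le_compat_r; auto using Cnorm_nonneg. }
    assert (H2 : L ^ 2 <= INR N * vnorm2 N x).
    { pose proof (Rsum_Cauchy_Schwarz N (fun _ => 1) (fun k => Cnorm (x k))) as HCS.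
      unfold L, vnorm2. rewrite (Rsum_ext N (fun k => Cnorm2 _) (fun k => Cnorm (x k) ^ 2))
        by (intros; apply Cnorm2_Cnorm).
      rewrite (Rsum_ext N (fun k => 1 * _) (fun k => Cnorm (x k))) in HCS by (intros; ring).
      rewrite (Rsum_ext N (fun _ => 1 ^ 2) (fun _ => 1)), Rsum_const in HCS by (intros; ring).
      lra. }
    pose proof (Cnorm_nonneg (Csum N (fun k => Cmul (E p k) (x k)))).
    assert (0 <= L) by (apply Rsum_nonneg; intros; apply Cnorm_nonneg).
    apply Rle_trans with ((sigma * L) ^ 2); [apply pow_incr; auto|].
    replace (INR N * sigma ^ 2 * vnorm2 N x) with (sigma ^ 2 * (INR N * vnorm2 N x)) by ring.
    rewrite Rpow_mult_distr. apply Rmult_le_compat_l; [apply pow2_ge_0 | lra]. }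
  unfold vnorm2 at 1. eapply Rle_trans; [apply Rsum_le, Hrow|].
  rewrite Rsum_const. right; ring.
Qed.

Lemma cdot_Mv_adj N M x d : cdot N x (Mv N M d) = cdot N (Mv N (adj M) x) d.
Proof.
  unfold cdot, Mv, adj.
  transitivity (Csum N (fun q => Csum N (fun k => Cmul (Cmul (Cconj (x q)) (M q k)) (d k)))).
  { apply Csum_ext; intros q _. rewrite Csum_mull. apply Csum_ext; intros; ring. }
  rewrite Csum_swap. apply Csum_ext; intros k _.
  rewrite Csum_conj, Csum_mulr. apply Csum_ext; intros q _.
  rewrite Cconj_mul, Cconj_involutive. ring.
Qed.

Lemma Mv_adj_Mv_unitary N V c k : unitary N V -> (k < N)%nat -> Mv N (adj V) (Mv N V c) k = c k.
Proof.
  intros HV Hk. rewrite <- (Csum_delta N k c Hk). unfold Mv.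
  transitivity (Csum N (fun l => Cmul (mmul N (adj V) V k l) (c l))).
  - unfold mmul.
    transitivity (Csum N (fun q => Csum N (fun l => Cmul (Cmul (adj V k q) (V q l)) (c l)))).
    + apply Csum_ext; intros q _. rewrite Csum_mull. apply Csum_ext; intros; ring.
    + rewrite Csum_swap. apply Csum_ext; intros l _. rewrite Csum_mulr. reflexivity.
  - apply Csum_ext; intros l Hl. rewrite HV; auto.
Qed.

Lemma cdot_Mv_unitary N V e f : unitary N V -> cdot N (Mv N V e) (Mv N V f) = cdot N e f.
Proof.
  intros HV. rewrite cdot_Mv_adj. apply Csum_ext; intros k Hk.
  rewrite Mv_adj_Mv_unitary; auto.
Qed.

Lemma vnorm2_Mv_unitary N V e : unitary N V -> vnorm2 N (Mv N V e) = vnorm2 N e.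
Proof. intros HV. rewrite !vnorm2_cdot, cdot_Mv_unitary; auto. Qed.

(* Bessel: [x - V V^* x] is orthogonal to [V V^* x]. *)
Lemma vnorm2_Mv_adj_le N V x : unitary N V -> vnorm2 N (Mv N (adj V) x) <= vnorm2 N x.
Proof.
  intros HV. set (d := Mv N (adj V) x). set (w := Mv N V d).
  assert (Hw : vnorm2 N w = vnorm2 N d) by (apply vnorm2_Mv_unitary; auto).
  assert (Hxw : fst (cdot N x w) = vnorm2 N d) by (unfold w; rewrite cdot_Mv_adj, vnorm2_cdot; reflexivity).
  assert (E : vnorm2 N (fun k => Cadd (x k) (Copp (w k))) = vnorm2 N x - 2 * fst (cdot N x w) + vnorm2 N w).
  { unfold vnorm2, cdot. rewrite fst_Csum.
    replace (Rsum N (fun k => Cnorm2 (x k)) - 2 * Rsum N (fun k => fst (Cmul (Cconj (x k)) (w k))))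
      with (Rsum N (fun k => Cnorm2 (x k)) + (-2) * Rsum N (fun k => fst (Cmul (Cconj (x k)) (w k)))) by ring.
    rewrite <- Rsum_scal, <- !Rsum_add. apply Rsum_ext; intros.
    rewrite Cnorm2_add, Cnorm2_opp. destruct (x k), (w k). unfold Cmul, Cconj, Copp; simpl. ring. }
  pose proof (vnorm2_nonneg N (fun k => Cadd (x k) (Copp (w k)))). lra.
Qed.

(** * Linear systems and singular values *)

(* Gaussian elimination of the last unknown with pivot equation [r]; the last equation is moved
   into slot [r] so that the reduced system again has its equations indexed by an initial segment. *)
Lemma homogeneous_system_nontrivial N m (A : nat -> nat -> cplx) : (m < N)%nat ->
  exists c, (exists k, (k < N)%nat /\ c k <> C0) /\ (forall k, (N <= k)%nat -> c k = C0) /\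
    forall i, (i < m)%nat -> Csum N (fun k => Cmul (A i k) (c k)) = C0.
Proof.
  revert m A. induction N as [|N IH]; intros m A Hm; [lia|].
  destruct (classic (exists r, (r < m)%nat /\ A r N <> C0)) as [[r [Hr HrN]]|Hzero].
  - set (row i := if Nat.eqb i r then (m - 1)%nat else i).
    set (l i := Cmul (A i N) (Cinv (A r N))).
    destruct (IH (m - 1)%nat (fun i k => Csub (A (row i) k) (Cmul (l (row i)) (A r k))) ltac:(lia))
      as [c' [[k0 [Hk0 Hck0]] [Hsupp Hc']]].
    set (tail := Csum N (fun k => Cmul (A r k) (c' k))).
    assert (Hrow : forall i, (i < m)%nat -> i <> r -> Csum N (fun k => Cmul (A i k) (c' k)) = Cmul (l i) tail).
    { intros i Hi Hir. set (i' := if Nat.eqb i (m - 1) then r else i).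
      assert (Hi' : (i' < m - 1)%nat /\ row i' = i).
      { unfold i', row. destruct (Nat.eqb_spec i (m - 1)), (Nat.eqb_spec r r), (Nat.eqb_spec i r);
          split; lia. }
      clearbody i'. destruct Hi' as [Hi'm <-].
      apply Csub_eq_C0. unfold tail. rewrite <- Csum_mul_sub_scal. apply Hc'; auto. }
    exists (fun k => if Nat.eqb k N then Cmul (Copp tail) (Cinv (A r N)) else c' k).
    split; [|split].
    + exists k0. split; [lia|]. destruct (Nat.eqb_spec k0 N); [lia | auto].
    + intros k Hk. destruct (Nat.eqb_spec k N); [lia | apply Hsupp; lia].
    + intros i Hi. simpl. rewrite Nat.eqb_refl.
      rewrite (Csum_ext N _ (fun k => Cmul (A i k) (c' k)))
        by (intros k Hk; destruct (Nat.eqb_spec k N); [lia | reflexivity]).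
      destruct (Nat.eq_dec i r) as [->|Hir].
      * fold tail. transitivity (Cadd tail (Cmul (Copp tail) (Cmul (A r N) (Cinv (A r N)))));
          [ring | rewrite Cmul_Cinv by auto; ring].
      * rewrite Hrow by auto. unfold l. ring.
  - exists (fun k => if Nat.eqb k N then C1 else C0). split; [|split].
    + exists N. split; [lia|]. rewrite Nat.eqb_refl. apply C1_neq_C0.
    + intros k Hk. destruct (Nat.eqb_spec k N); [lia | reflexivity].
    + intros i Hi. simpl. rewrite Nat.eqb_refl, Csum_zero.
      * destruct (classic (A i N = C0)) as [->|Hne]; [ring | exfalso; eauto].
      * intros k Hk. destruct (Nat.eqb_spec k N); [lia | ring].
Qed.

Section SVD.
Variables (N : nat) (A U V : cmat) (sig : nat -> R).
Hypothesis Hsvd : is_svd N A U sig V.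

Lemma svd_sig_antitone k j : (k <= j)%nat -> (j < N)%nat -> sig j <= sig k.
Proof.
  destruct Hsvd as [_ [_ [_ [Hdec _]]]]. intros Hkj. induction Hkj; intros Hj; [lra|].
  pose proof (Hdec m Hj). pose proof (IHHkj ltac:(lia)). lra.
Qed.

Lemma svd_sig_nonneg k : (k < N)%nat -> 0 <= sig k.
Proof. destruct Hsvd as [_ [_ [Hpos _]]]. auto. Qed.

Lemma vnorm2_Mv_svd x :
  vnorm2 N (Mv N A x) = Rsum N (fun k => sig k ^ 2 * Cnorm2 (Mv N (adj V) x k)).
Proof.
  destruct Hsvd as [HU [_ [_ [_ HA]]]].
  rewrite (vnorm2_ext N _ (Mv N U (fun k => Cmul (RtoC (sig k)) (Mv N (adj V) x k)))).
  - rewrite vnorm2_Mv_unitary by auto. apply Rsum_ext; intros.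
    rewrite Cnorm2_mul, Cnorm2_RtoC. reflexivity.
  - intros p Hp. unfold Mv, adj.
    transitivity (Csum N (fun q => Csum N (fun k =>
      Cmul (Cmul (Cmul (U p k) (RtoC (sig k))) (Cconj (V q k))) (x q)))).
    + apply Csum_ext; intros q Hq. rewrite HA, Csum_mulr by auto. reflexivity.
    + rewrite Csum_swap. apply Csum_ext; intros k _. rewrite !Csum_mull.
      apply Csum_ext; intros; ring.
Qed.

Lemma svd_norm2_lower j c : (j < N)%nat -> (forall k, (j < k)%nat -> c k = C0) ->
  sig j ^ 2 * vnorm2 N c <= vnorm2 N (Mv N A (Mv N V c)).
Proof.
  pose proof Hsvd as [_ [HV _]]. intros Hj Hc.
  rewrite vnorm2_Mv_svd. unfold vnorm2. rewrite <- Rsum_scal. apply Rsum_le.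
  intros k Hk. rewrite Mv_adj_Mv_unitary by auto.
  destruct (le_lt_dec k j).
  - apply Rmult_le_compat_r; [apply Cnorm2_nonneg|].
    pose proof (svd_sig_nonneg j Hj). pose proof (svd_sig_antitone k j ltac:(lia) Hj).
    apply pow_incr; lra.
  - rewrite Hc by lia. unfold Cnorm2, C0; simpl. lra.
Qed.

Lemma svd_norm2_upper m x : (forall k, (k < m)%nat -> Mv N (adj V) x k = C0) ->
  vnorm2 N (Mv N A x) <= sig m ^ 2 * vnorm2 N x.
Proof.
  pose proof Hsvd as [_ [HV _]]. intros Hx.
  apply Rle_trans with (sig m ^ 2 * vnorm2 N (Mv N (adj V) x)).
  - rewrite vnorm2_Mv_svd. unfold vnorm2. rewrite <- Rsum_scal. apply Rsum_le.
    intros k Hk. destruct (lt_dec k m).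
    + rewrite Hx by auto. unfold Cnorm2, C0; simpl. lra.
    + apply Rmult_le_compat_r; [apply Cnorm2_nonneg|].
      pose proof (svd_sig_nonneg k Hk). pose proof (svd_sig_antitone m k ltac:(lia) Hk).
      apply pow_incr; lra.
  - apply Rmult_le_compat_l; [apply pow2_ge_0 | apply vnorm2_Mv_adj_le; auto].
Qed.

End SVD.

(* Courant-Fischer on the span of the first [j+1] right singular vectors, which meets the
   subspace on which [A] and [E] agree. *)
Lemma svd_sig_le_perturbation N A U sig V E (e : nat -> nat -> cplx) n j eps :
  is_svd N A U sig V -> (n <= j < N)%nat -> 0 <= eps ->
  (forall x, (forall i, (i < n)%nat -> Csum N (fun q => Cmul (e i q) (x q)) = C0) ->
     forall p, (p < N)%nat -> Mv N A x p = Mv N E x p) ->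
  (forall x, vnorm2 N (Mv N E x) <= eps ^ 2 * vnorm2 N x) ->
  sig j <= eps.
Proof.
  intros Hsvd Hj Heps HA HE. pose proof Hsvd as [_ [HV _]].
  destruct (homogeneous_system_nontrivial (S j) n (fun i k => Csum N (fun q => Cmul (e i q) (V q k))))
    as [c [[k0 [Hk0 Hck0]] [Hsupp Hc]]]; [lia|].
  set (x := Mv N V c).
  assert (Hperp : forall i, (i < n)%nat -> Csum N (fun q => Cmul (e i q) (x q)) = C0).
  { intros i Hi. rewrite <- (Hc i Hi). unfold x, Mv. rewrite Csum_mul_Csum.
    apply Csum_trunc; [lia|]. intros k Hk. rewrite Hsupp by lia. ring. }
  pose proof (svd_norm2_lower N A U V sig Hsvd j c ltac:(lia) ltac:(intros; apply Hsupp; lia)) as Hlow.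
  fold x in Hlow. rewrite (vnorm2_ext N _ _ (HA x Hperp)) in Hlow.
  pose proof (HE x) as Hup. assert (Hxc : vnorm2 N x = vnorm2 N c) by (apply vnorm2_Mv_unitary; auto).
  rewrite Hxc in Hup.
  pose proof (vnorm2_pos N c k0 ltac:(lia) Hck0).
  assert (sig j ^ 2 <= eps ^ 2) by (apply (Rmult_le_reg_r (vnorm2 N c)); lra).
  nra.
Qed.

(* Any [n]-dimensional family spans a vector orthogonal to the first [n-1] right singular vectors. *)
Lemma svd_small_vector_in_span N A U sig V n f : is_svd N A U sig V -> (1 <= n)%nat ->
  exists b, (exists i, (i < n)%nat /\ b i <> C0) /\
    vnorm2 N (Mv N A (lincomb n f b)) <= sig (n - 1)%nat ^ 2 * vnorm2 N (lincomb n f b).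
Proof.
  intros Hsvd Hn.
  destruct (homogeneous_system_nontrivial n (n - 1)
              (fun k i => Csum N (fun q => Cmul (Cconj (V q k)) (f i q))))
    as [b [Hb [_ Hker]]]; [lia|].
  exists b. split; auto. apply (svd_norm2_upper N A U V sig Hsvd).
  intros k Hk. rewrite <- (Hker k Hk). apply Csum_mul_Csum.
Qed.

(** * Exponential sums *)

Definition expi_seq (theta : R) (p : nat) : cplx := Cexpi (theta * INR p).

Definition expi_sum (n : nat) (theta : nat -> R) : (nat -> cplx) -> nat -> cplx :=
  lincomb n (fun i => expi_seq (theta i)).

Lemma expi_seq_0 theta : expi_seq theta 0 = C1.
Proof. unfold expi_seq, Cexpi. simpl. rewrite Rmult_0_r, cos_0, sin_0. reflexivity. Qed.

Lemma expi_seq_S theta p : expi_seq theta (S p) = Cmul (expi_seq theta p) (Cexpi theta).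
Proof. unfold expi_seq. rewrite S_INR, <- Cexpi_add. f_equal. ring. Qed.

Lemma Cconj_expi_seq theta p : Cconj (expi_seq theta p) = expi_seq (- theta) p.
Proof. unfold expi_seq. rewrite Cconj_Cexpi. f_equal. ring. Qed.

Definition Cprod_list (l : list nat) (f : nat -> cplx) : cplx :=
  fold_right (fun k acc => Cmul (f k) acc) C1 l.

Definition Rprod_list (l : list nat) (f : nat -> R) : R :=
  fold_right (fun k acc => f k * acc) 1 l.

Lemma Cprod_list_zero l f i : In i l -> f i = C0 -> Cprod_list l f = C0.
Proof.
  induction l as [|k l IH]; simpl; intros Hi Hf; [contradiction|].
  destruct Hi as [->|Hi]; [rewrite Hf | rewrite IH]; auto; ring.
Qed.

Lemma Cnorm_Cprod_list l f : Cnorm (Cprod_list l f) = Rprod_list l (fun k => Cnorm (f k)).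
Proof.
  induction l as [|k l IH]; simpl.
  - rewrite Cnorm_sqrt. unfold Cnorm2, C1; simpl. rewrite Rmult_0_r, Rplus_0_r, Rmult_1_r. apply sqrt_1.
  - rewrite Cnorm_mul, IH. reflexivity.
Qed.

Lemma Rprod_list_ext l f g : (forall k, In k l -> f k = g k) -> Rprod_list l f = Rprod_list l g.
Proof. induction l as [|k l IH]; simpl; intros H; auto. rewrite H, IH; auto. Qed.

Lemma Rprod_list_nonneg l f : (forall k, In k l -> 0 <= f k) -> 0 <= Rprod_list l f.
Proof. induction l as [|k l IH]; simpl; intros H; [lra|]. apply Rmult_le_pos; auto. Qed.

Lemma Rprod_list_scal l c f : Rprod_list l (fun k => c * f k) = c ^ length l * Rprod_list l f.
Proof. induction l as [|k l IH]; simpl; [ring|]. rewrite IH. ring. Qed.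

Lemma Rprod_list_app_cons l1 k l2 f : Rprod_list (l1 ++ k :: l2) f = f k * Rprod_list (l1 ++ l2) f.
Proof. induction l1 as [|k1 l1 IH]; simpl; [reflexivity|]. rewrite IH. ring. Qed.

Lemma Rprod_list_partition l f (p : nat -> bool) :
  Rprod_list l f = Rprod_list (filter p l) f * Rprod_list (filter (fun k => negb (p k)) l) f.
Proof. induction l as [|k l IH]; simpl; [ring|]. destruct (p k); simpl; rewrite IH; ring. Qed.

Lemma Rprod_list_lt l f g : l <> nil -> (forall k, In k l -> 0 <= f k < g k) ->
  Rprod_list l f < Rprod_list l g.
Proof.
  induction l as [|k l IH]; intros Hne H; [contradiction|]. simpl.
  specialize (H k (or_introl eq_refl)) as Hk.
  destruct l as [|k' l'].
  - simpl. lra.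
  - assert (Rprod_list (k' :: l') f < Rprod_list (k' :: l') g)
      by (apply IH; [discriminate | intros; apply H; right; auto]).
    assert (0 <= Rprod_list (k' :: l') f) by (apply Rprod_list_nonneg; intros; apply H; right; auto).
    apply Rmult_le_0_lt_compat; lra.
Qed.

(* [prod_(k in l) (S - u k)] applied to [g], with [S] the shift [g p |-> g (p + 1)]. *)
Fixpoint diffop (u : nat -> cplx) (l : list nat) (g : nat -> cplx) : nat -> cplx :=
  match l with
  | nil => g
  | k :: l' => fun p => Csub (diffop u l' g (S p)) (Cmul (u k) (diffop u l' g p))
  end.

Lemma diffop_expi_sum n theta c l p :
  diffop (fun k => Cexpi (theta k)) l (expi_sum n theta c) p =
  Csum n (fun i => Cmul (Cmul (expi_seq (theta i) p) (c i))
                        (Cprod_list l (fun k => Csub (Cexpi (theta i)) (Cexpi (theta k))))).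
Proof.
  revert p. induction l as [|k l IH]; intros p; simpl.
  - apply Csum_ext; intros; ring.
  - rewrite !IH. unfold Csub at 1. rewrite Csum_mull, Csum_opp, <- Csum_add.
    apply Csum_ext; intros i _. rewrite expi_seq_S. ring.
Qed.

Lemma diffop_bound u g G M l p : (forall k, Cnorm (u k) = 1) ->
  (forall q, (q <= M)%nat -> Cnorm (g q) <= G) -> (p + length l <= M)%nat ->
  Cnorm (diffop u l g p) <= 2 ^ length l * G.
Proof.
  intros Hu Hg. revert p. induction l as [|k l IH]; intros p Hp; simpl in *.
  - rewrite Rmult_1_l. apply Hg. lia.
  - unfold Csub. eapply Rle_trans; [apply Cnorm_triangle|].
    rewrite Cnorm_opp, Cnorm_mul, Hu.
    pose proof (IH (S p) ltac:(lia)). pose proof (IH p ltac:(lia)). lra.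
Qed.

Definition others (n j : nat) : list nat := seq 0 j ++ seq (S j) (n - S j).

Lemma in_others n j k : (j < n)%nat -> (In k (others n j) <-> (k < n)%nat /\ k <> j).
Proof. intros. unfold others. rewrite in_app_iff, !in_seq. lia. Qed.

Lemma others_length n j : (j < n)%nat -> length (others n j) = (n - 1)%nat.
Proof. intros. unfold others. rewrite length_app, !length_seq. lia. Qed.

Definition node_gap (n : nat) (theta : nat -> R) (j : nat) : R :=
  Rprod_list (others n j) (fun k => Cnorm (Csub (Cexpi (theta j)) (Cexpi (theta k)))).

Lemma node_gap_opp n theta j : node_gap n (fun k => - theta k) j = node_gap n theta j.
Proof.
  unfold node_gap. apply Rprod_list_ext. intros k _.
  rewrite <- !Cconj_Cexpi, <- Cconj_sub, Cnorm_conj. reflexivity.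
Qed.

(* The operator [prod_(k <> j) (S - e^(i theta_k))] kills every frequency but [theta_j]. *)
Lemma expi_sum_coef_bound n N theta c j : (n <= N)%nat -> (j < n)%nat ->
  Cnorm (c j) * node_gap n theta j <= 2 ^ (n - 1) * sqrt (vnorm2 N (expi_sum n theta c)).
Proof.
  intros HnN Hj.
  assert (E : diffop (fun k => Cexpi (theta k)) (others n j) (expi_sum n theta c) 0 =
              Cmul (c j) (Cprod_list (others n j) (fun k => Csub (Cexpi (theta j)) (Cexpi (theta k))))).
  { rewrite diffop_expi_sum, (Csum_single n j); auto.
    - rewrite expi_seq_0. ring.
    - intros i Hi Hij. rewrite (Cprod_list_zero _ _ i); [ring | apply in_others; auto | cplx_ring]. }
  unfold node_gap. rewrite <- Cnorm_Cprod_list, <- Cnorm_mul, <- E, <- (others_length n j Hj).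
  apply (diffop_bound _ _ _ (n - 1)).
  - intros; apply Cnorm_Cexpi.
  - intros q Hq. rewrite Cnorm_sqrt. apply sqrt_le_1_alt.
    apply (Rsum_term N (fun k => Cnorm2 (expi_sum n theta c k))); [intros; apply Cnorm2_nonneg | lia].
  - rewrite others_length; lia.
Qed.

Lemma expi_sum_coef_norm2_le n N theta c Q j : (n <= N)%nat -> (j < n)%nat -> 0 < Q ->
  2 ^ (n - 1) * Q < node_gap n theta j ->
  Q ^ 2 * Cnorm2 (c j) <= vnorm2 N (expi_sum n theta c) /\
  (c j <> C0 -> Q ^ 2 * Cnorm2 (c j) < vnorm2 N (expi_sum n theta c)).
Proof.
  intros HnN Hj HQ Hgap.
  pose proof (expi_sum_coef_bound n N theta c j HnN Hj) as Hb.
  set (G := vnorm2 N (expi_sum n theta c)) in *.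
  assert (H2 : 0 < 2 ^ (n - 1)) by (apply pow_lt; lra).
  pose proof (Cnorm_nonneg (c j)). pose proof (sqrt_pos G).
  assert (Hle : Cnorm (c j) * Q <= sqrt G).
  { apply (Rmult_le_reg_l (2 ^ (n - 1))); auto. nra. }
  rewrite Cnorm2_Cnorm, <- (pow2_sqrt G) by apply vnorm2_nonneg. split.
  - rewrite <- Rpow_mult_distr, Rmult_comm. apply pow_incr. split; [nra | auto].
  - intros Hc. assert (0 < Cnorm (c j)) by (rewrite Cnorm_sqrt; apply sqrt_lt_R0, Cnorm2_pos; auto).
    assert (Hlt : Cnorm (c j) * Q < sqrt G).
    { apply (Rmult_lt_reg_l (2 ^ (n - 1))); auto. nra. }
    rewrite <- Rpow_mult_distr, Rmult_comm. simpl. rewrite !Rmult_1_r.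
    apply Rmult_le_0_lt_compat; nra.
Qed.

Lemma expi_sum_norm2_lower n N theta c Q : (n <= N)%nat -> 0 < Q ->
  (forall j, (j < n)%nat -> 2 ^ (n - 1) * Q < node_gap n theta j) ->
  Q ^ 2 * vnorm2 n c <= INR n * vnorm2 N (expi_sum n theta c) /\
  ((exists j, (j < n)%nat /\ c j <> C0) ->
   Q ^ 2 * vnorm2 n c < INR n * vnorm2 N (expi_sum n theta c)).
Proof.
  intros HnN HQ Hgap.
  replace (Q ^ 2 * vnorm2 n c) with (Rsum n (fun j => Q ^ 2 * Cnorm2 (c j))) by apply Rsum_scal.
  rewrite <- Rsum_const.
  assert (Hj : forall j, (j < n)%nat -> _) by
    (intros j Hj; exact (expi_sum_coef_norm2_le n N theta c Q j HnN Hj HQ (Hgap j Hj))).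
  split.
  - apply Rsum_le. intros j Hjn. apply Hj; auto.
  - intros [j0 [Hj0 Hc]]. apply Rsum_lt.
    + intros j Hjn. apply Hj; auto.
    + exists j0. split; auto. apply Hj; auto.
Qed.

(** * Separated nodes *)

Lemma sin_gt_jordan x : 0 < x < PI / 2 -> 2 * x / PI < sin x.
Proof.
  intros [H0 H1]. pose proof PI_RGT_0.
  destruct (MVT_cor2 sin cos 0 x H0 (fun c _ => derivable_pt_lim_sin c)) as [c1 [E1 Hc1]].
  destruct (MVT_cor2 sin cos x (PI / 2) H1 (fun c _ => derivable_pt_lim_sin c)) as [c2 [E2 Hc2]].
  rewrite sin_0 in E1. rewrite sin_PI2 in E2.
  (* the chord slopes [sin x / x = cos c1] and [(1 - sin x) / (PI/2 - x) = cos c2] compare since cos decreases *)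
  assert (cos c2 < cos c1) by (apply cos_decreasing_1; lra).
  assert (sin x * (PI / 2 - x) > x * (1 - sin x)).
  { rewrite E2. replace (sin x) with (cos c1 * x) at 1 by lra.
    assert (0 < x * (PI / 2 - x)) by nra. nra. }
  apply (Rmult_lt_reg_r (PI / 2)); [lra|]. field_simplify; [nra | lra].
Qed.

Lemma Cnorm_expi_sub a b : Cnorm (Csub (Cexpi a) (Cexpi b)) = 2 * Rabs (sin ((a - b) / 2)).
Proof.
  rewrite Cnorm_sqrt. set (t := sin ((a - b) / 2)).
  replace (Cnorm2 (Csub (Cexpi a) (Cexpi b))) with ((2 * Rabs t) * (2 * Rabs t)).
  - apply sqrt_square. pose proof (Rabs_pos t). lra.
  - unfold Cnorm2, Csub, Cadd, Copp, Cexpi; simpl.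
    assert (E : cos (a - b) = 1 - 2 * t * t).
    { unfold t. rewrite <- cos_2a_sin. f_equal. field. }
    rewrite cos_minus in E. pose proof (sin2_cos2 a); pose proof (sin2_cos2 b).
    assert (Rabs t * Rabs t = t * t) by (rewrite <- Rabs_mult; apply Rabs_pos_eq; nra).
    unfold Rsqr in *. nra.
Qed.

Lemma Cnorm_expi_sub_gt a b : 0 < Rabs (a - b) < PI ->
  2 * Rabs (a - b) / PI < Cnorm (Csub (Cexpi a) (Cexpi b)).
Proof.
  intros H. pose proof PI_RGT_0. rewrite Cnorm_expi_sub.
  assert (E : Rabs (sin ((a - b) / 2)) = sin (Rabs (a - b) / 2)).
  { destruct (Rle_dec 0 (a - b)).
    - rewrite (Rabs_pos_eq (a - b)) in * by lra. apply Rabs_pos_eq, sin_ge_0; lra.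
    - rewrite (Rabs_left (a - b)) in * by lra.
      replace ((a - b) / 2) with (- (- (a - b) / 2)) by field.
      rewrite sin_neg, Rabs_Ropp. apply Rabs_pos_eq, sin_ge_0; lra. }
  rewrite E. pose proof (sin_gt_jordan (Rabs (a - b) / 2) ltac:(lra)).
  replace (2 * (Rabs (a - b) / 2) / PI) with (Rabs (a - b) / PI) in H1 by (field; lra).
  replace (2 * Rabs (a - b) / PI) with (2 * (Rabs (a - b) / PI)) by (field; lra). lra.
Qed.

Lemma exists_argmax (l : list nat) (y : nat -> R) : l <> nil ->
  exists M, In M l /\ forall b, In b l -> y b <= y M.
Proof.
  induction l as [|k l IH]; intros H; [contradiction|]. destruct l as [|k' l'].
  - exists k. split; [left; auto|]. intros b [->|[]]. lra.
  - destruct IH as [M [HM HMax]]; [discriminate|]. destruct (Rle_dec (y k) (y M)).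
    + exists M. split; [right; auto|]. intros b [<-|Hb]; auto.
    + exists k. split; [left; auto|]. intros b [<-|Hb]; [lra|]. specialize (HMax b Hb). lra.
Qed.

(* Induction on the farthest point, which lies at distance at least [m D] from [x]. *)
Lemma Rprod_list_one_side_ge (y : nat -> R) (x D : R) : 0 <= D -> forall m l, length l = m -> NoDup l ->
  (forall k, In k l -> D <= y k - x) ->
  (forall p k, In p l -> In k l -> p <> k -> D <= Rabs (y p - y k)) ->
  D ^ m * INR (fact m) <= Rprod_list l (fun k => y k - x) /\
  (l <> nil -> exists b, In b l /\ INR m * D <= y b - x).
Proof.
  intros HD m. induction m as [|m IH]; intros l Hlen Hnd Hx Hsep.
  - destruct l; simpl in *; [|lia]. split; [lra | contradiction].
  - assert (Hne : l <> nil) by (intros ->; discriminate).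
    destruct (exists_argmax l y Hne) as [M [HM HMax]].
    destruct (in_split M l HM) as [l1 [l2 ->]].
    pose proof (NoDup_remove_1 _ _ _ Hnd) as Hnd'. pose proof (NoDup_remove_2 _ _ _ Hnd) as Hnin.
    assert (Hin : forall k, In k (l1 ++ l2) -> In k (l1 ++ M :: l2)).
    { intros k Hk. apply in_app_or in Hk. apply in_or_app. simpl. tauto. }
    destruct (IH (l1 ++ l2)) as [IH1 IH2]; auto.
    { rewrite length_app in *. simpl in Hlen. lia. }
    assert (HMx : INR (S m) * D <= y M - x).
    { destruct m as [|m].
      - simpl. specialize (Hx M HM). lra.
      - destruct IH2 as [b [Hb Hbx]].
        { intros E. apply app_eq_nil in E as [-> ->]. discriminate. }
        assert (M <> b) by (intros ->; contradiction).
        pose proof (Hsep M b HM (Hin b Hb) H). pose proof (HMax b (Hin b Hb)).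
        rewrite Rabs_pos_eq in H0 by lra. rewrite S_INR. lra. }
    split; [|intros _; exists M; auto].
    rewrite Rprod_list_app_cons, fact_simpl, mult_INR. simpl pow.
    assert (0 <= INR (S m) * D) by (apply Rmult_le_pos; auto; apply pos_INR).
    assert (0 <= D ^ m * INR (fact m)) by (apply Rmult_le_pos; [apply pow_le; auto | apply pos_INR]).
    replace (D * D ^ m * (INR (S m) * INR (fact m))) with ((INR (S m) * D) * (D ^ m * INR (fact m))) by ring.
    apply Rmult_le_compat; auto.
Qed.

Lemma Rprod_list_dist_right_ge (y : nat -> R) x D l : 0 <= D -> NoDup l ->
  (forall k, In k l -> D <= y k - x) ->
  (forall p k, In p l -> In k l -> p <> k -> D <= Rabs (y p - y k)) ->
  D ^ length l * INR (fact (length l)) <= Rprod_list l (fun k => Rabs (x - y k)).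
Proof.
  intros HD Hnd Hx Hsep. rewrite (Rprod_list_ext _ _ (fun k => y k - x)).
  - apply (Rprod_list_one_side_ge y x D HD _ l eq_refl); auto.
  - intros k Hk. specialize (Hx k Hk). rewrite Rabs_left1 by lra. ring.
Qed.

Lemma fact_mul_balanced_le M L : (L <= M)%nat ->
  (fact (M / 2) * fact (M - M / 2) <= fact L * fact (M - L))%nat.
Proof.
  assert (Hhalf : (2 * (M / 2) <= M <= 2 * (M / 2) + 1)%nat).
  { pose proof (Nat.div_mod M 2 ltac:(lia)). pose proof (Nat.mod_upper_bound M 2 ltac:(lia)). lia. }
  (* moving [L] one step towards [M / 2] does not increase [L! (M - L)!] *)
  assert (Hdown : forall k L, (L + k = M / 2)%nat ->
                    (fact (M / 2) * fact (M - M / 2) <= fact L * fact (M - L))%nat).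
  { induction k as [|k IHk]; intros L0 HL.
    - rewrite Nat.add_0_r in HL. subst. lia.
    - eapply Nat.le_trans; [apply (IHk (S L0)); lia|].
      replace (M - L0)%nat with (S (M - S L0)) by lia. rewrite !fact_simpl.
      assert (S L0 <= S (M - S L0))%nat by lia. nia. }
  intros HL. destruct (le_lt_dec L (M / 2)).
  - apply (Hdown (M / 2 - L)%nat). lia.
  - replace (fact L * fact (M - L))%nat with (fact (M - L) * fact (M - (M - L)))%nat.
    + apply (Hdown (M / 2 - (M - L))%nat). lia.
    + replace (M - (M - L))%nat with L by lia. apply Nat.mul_comm.
Qed.

Lemma zeta_balanced n : (1 <= n)%nat ->
  zeta n = INR (fact ((n - 1) / 2)) * INR (fact ((n - 1) - (n - 1) / 2)).
Proof.
  intros Hn. unfold zeta. destruct (Nat.Even_or_Odd n) as [[r ->]|[r ->]].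
  - replace (Nat.odd (2 * r)) with false by (rewrite <- Nat.negb_even, Nat.even_mul; reflexivity).
    replace ((2 * r - 1) / 2)%nat with (r - 1)%nat by (apply Nat.div_unique with 1%nat; lia).
    replace (2 * r / 2)%nat with r by (apply Nat.div_unique with 0%nat; lia).
    replace ((2 * r - 2) / 2)%nat with (r - 1)%nat by (apply Nat.div_unique with 0%nat; lia).
    replace (2 * r - 1 - (r - 1))%nat with r by lia. ring.
  - replace (Nat.odd (2 * r + 1)) with true by (symmetry; apply Nat.odd_spec; exists r; reflexivity).
    replace ((2 * r + 1 - 1) / 2)%nat with r by (apply Nat.div_unique with 0%nat; lia).
    replace (2 * r + 1 - 1 - r)%nat with r by lia. simpl. ring.
Qed.

Lemma zeta_pos n : (1 <= n)%nat -> 0 < zeta n.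
Proof. intros. rewrite zeta_balanced by auto. apply Rmult_lt_0_compat; apply lt_0_INR, lt_O_fact. Qed.

Lemma zeta_le_fact_split n L R : (1 <= n)%nat -> (L + R = n - 1)%nat ->
  zeta n <= INR (fact L) * INR (fact R).
Proof.
  intros Hn HLR. rewrite zeta_balanced by auto. rewrite <- !mult_INR. apply le_INR.
  replace R with ((n - 1) - L)%nat by lia. apply fact_mul_balanced_le. lia.
Qed.

(* The other nodes split into those left and right of [y j]; the balanced split is the worst case. *)
Lemma node_dist_prod_ge_zeta (n : nat) (y : nat -> R) (D : R) (j : nat) : 0 < D -> (j < n)%nat ->
  (forall p k, (p < n)%nat -> (k < n)%nat -> p <> k -> D <= Rabs (y p - y k)) ->
  D ^ (n - 1) * zeta n <= Rprod_list (others n j) (fun k => Rabs (y j - y k)).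
Proof.
  intros HD Hj Hsep.
  set (left k := if Rlt_dec (y k) (y j) then true else false).
  rewrite (Rprod_list_partition _ _ left).
  set (lL := filter left (others n j)). set (lR := filter (fun k => negb (left k)) (others n j)).
  assert (Hnd : NoDup (others n j)).
  { apply NoDup_app; try apply seq_NoDup. intros k Hk1 Hk2. apply in_seq in Hk1, Hk2. lia. }
  assert (Hoth : forall p k, In p (others n j) -> In k (others n j) -> p <> k -> D <= Rabs (y p - y k)).
  { intros p k Hp Hk. apply in_others in Hp, Hk; auto. apply Hsep; tauto. }
  assert (Hgap : forall k, In k (others n j) -> D <= Rabs (y j - y k)).
  { intros k Hk. apply in_others in Hk as [Hk Hkj]; auto. }
  assert (HL : D ^ length lL * INR (fact (length lL)) <= Rprod_list lL (fun k => Rabs (y j - y k))).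
  { rewrite (Rprod_list_ext _ _ (fun k => Rabs (- y j - - y k)))
      by (intros; rewrite <- Rabs_Ropp; f_equal; ring).
    apply Rprod_list_dist_right_ge; [lra | apply NoDup_filter; auto | |].
    - intros k Hk. apply filter_In in Hk as [Hk Hl]. pose proof (Hgap k Hk). unfold left in Hl.
      destruct (Rlt_dec (y k) (y j)); [|discriminate]. rewrite Rabs_right in * by lra. lra.
    - intros p k Hp Hk Hpk. apply filter_In in Hp as [Hp _], Hk as [Hk _].
      replace (- y p - - y k) with (- (y p - y k)) by ring. rewrite Rabs_Ropp. auto. }
  assert (HR : D ^ length lR * INR (fact (length lR)) <= Rprod_list lR (fun k => Rabs (y j - y k))).
  { apply Rprod_list_dist_right_ge; [lra | apply NoDup_filter; auto | |].
    - intros k Hk. apply filter_In in Hk as [Hk Hl]. pose proof (Hgap k Hk). unfold left in Hl.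
      destruct (Rlt_dec (y k) (y j)) as [|Hkj]; [discriminate|].
      rewrite Rabs_left1 in * by (apply Rnot_lt_le in Hkj; lra). lra.
    - intros p k Hp Hk Hpk. apply filter_In in Hp as [Hp _], Hk as [Hk _]. auto. }
  assert (Hlen : (length lL + length lR = n - 1)%nat).
  { unfold lL, lR. rewrite <- (others_length n j Hj). clear.
    induction (others n j) as [|k l IH]; simpl; [reflexivity|]. destruct (left k); simpl; lia. }
  pose proof (zeta_le_fact_split n _ _ ltac:(lia) Hlen) as Hz.
  rewrite <- Hlen, pow_add.
  apply Rle_trans with ((D ^ length lL * INR (fact (length lL))) * (D ^ length lR * INR (fact (length lR)))).
  - replace (D ^ length lL * INR (fact (length lL)) * (D ^ length lR * INR (fact (length lR))))
      with ((D ^ length lL * D ^ length lR) * (INR (fact (length lL)) * INR (fact (length lR)))) by ring.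
    apply Rmult_le_compat_l; auto. apply Rmult_le_pos; apply pow_le; lra.
  - apply Rmult_le_compat; auto; apply Rmult_le_pos; try apply pow_le; try apply pos_INR; lra.
Qed.

(* Jordan's inequality turns the chordal distances into [2 h / PI] times the distances of the [y k]. *)
Lemma node_gap_gt (n : nat) (y : nat -> R) (h D : R) (j : nat) : (2 <= n)%nat -> 0 < h -> 0 < D ->
  (forall p k, (p < n)%nat -> (k < n)%nat -> p <> k -> D <= Rabs (y p - y k) /\ h * Rabs (y p - y k) < PI) ->
  (j < n)%nat ->
  (2 * h * D / PI) ^ (n - 1) * zeta n < node_gap n (fun k => y k * h) j.
Proof.
  intros Hn Hh HD Hsep Hj. pose proof PI_RGT_0.
  assert (Hc : 0 < 2 * h / PI) by (apply Rdiv_lt_0_compat; lra).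
  apply Rle_lt_trans with (Rprod_list (others n j) (fun k => 2 * h / PI * Rabs (y j - y k))).
  - rewrite Rprod_list_scal, others_length by auto.
    replace (2 * h * D / PI) with (2 * h / PI * D) by (field; lra).
    rewrite Rpow_mult_distr, Rmult_assoc. apply Rmult_le_compat_l; [apply pow_le; lra|].
    apply node_dist_prod_ge_zeta; auto. intros p k Hp Hk Hpk. apply Hsep; auto.
  - apply Rprod_list_lt.
    + intros E. pose proof (others_length n j Hj) as Hl. rewrite E in Hl. simpl in Hl. lia.
    + intros k Hk. apply in_others in Hk as [Hk Hkj]; auto.
      destruct (Hsep j k Hj Hk (fun E => Hkj (eq_sym E))) as [HDk Hpi].
      assert (E : Rabs (y j * h - y k * h) = h * Rabs (y j - y k)).
      { replace (y j * h - y k * h) with (h * (y j - y k)) by ring. rewrite Rabs_mult, Rabs_pos_eq; lra. }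
      split; [apply Rmult_le_pos; [lra | apply Rabs_pos]|].
      replace (2 * h / PI * Rabs (y j - y k)) with (2 * (h * Rabs (y j - y k)) / PI) by (field; lra).
      rewrite <- E. apply Cnorm_expi_sub_gt. rewrite E. split; [apply Rmult_lt_0_compat|]; lra.
Qed.

(** * The sampled Hankel matrix *)

Lemma Mv_hankel_add N f g x p :
  Mv N (hankel (fun t => Cadd (f t) (g t))) x p = Cadd (Mv N (hankel f) x p) (Mv N (hankel g) x p).
Proof. unfold Mv, hankel. rewrite <- Csum_add. apply Csum_ext; intros; ring. Qed.

(* With [h = Omega / s] the samples are [z_(p+q+1) = - Omega + (p + q) h], so the model Hankel
   matrix is [sum_i a_i e^(- i y_i Omega) v_i v_i^T] with [v_i = expi_seq (y_i h)]. *)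
Lemma Mv_hankel_model n s Omega a y N x p : (s <> 0)%nat ->
  Mv N (hankel (fun t => model n a y (zpt Omega s t))) x p =
  expi_sum n (fun i => y i * (Omega / INR s))
    (fun i => Cmul (Cmul (a i) (Cexpi (- (y i * Omega))))
                   (Csum N (fun q => Cmul (expi_seq (y i * (Omega / INR s)) q) (x q)))) p.
Proof.
  intros Hs. unfold Mv, hankel, model, expi_sum, lincomb.
  transitivity (Csum N (fun q => Csum n (fun i =>
    Cmul (Cmul (expi_seq (y i * (Omega / INR s)) p) (Cmul (a i) (Cexpi (- (y i * Omega)))))
         (Cmul (expi_seq (y i * (Omega / INR s)) q) (x q))))).
  - apply Csum_ext; intros q _. rewrite Csum_mulr. apply Csum_ext; intros i _.
    unfold zpt, expi_seq. rewrite !plus_INR.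
    replace (y i * (- Omega + (INR p + INR q + INR 1 - 1) / INR s * Omega))
      with (- (y i * Omega) + (y i * (Omega / INR s) * INR p + y i * (Omega / INR s) * INR q))
      by (simpl; field; apply not_0_INR; auto).
    rewrite !Cexpi_add. ring.
  - rewrite Csum_swap. apply Csum_ext; intros i _. rewrite !Csum_mull. apply Csum_ext; intros; ring.
Qed.

Lemma Mv_hankel_noise s W sigma x : 0 <= sigma ->
  (forall t, (1 <= t <= 2 * s + 1)%nat -> Cnorm (W t) <= sigma) ->
  vnorm2 (s + 1) (Mv (s + 1) (hankel W) x) <= (INR (s + 1) * sigma) ^ 2 * vnorm2 (s + 1) x.
Proof. intros Hsigma HW. apply Mv_entry_bound; auto. intros p q Hp Hq. apply HW. lia. Qed.

Lemma hankel_sig_tail_le n s Omega sigma a y W U V sig :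
  (n <= s)%nat -> (s <> 0)%nat -> 0 <= sigma ->
  (forall t, (1 <= t <= 2 * s + 1)%nat -> Cnorm (W t) <= sigma) ->
  is_svd (s + 1) (hankel (fun t => Cadd (model n a y (zpt Omega s t)) (W t))) U sig V ->
  forall j, (n <= j <= s)%nat -> sig j <= INR (s + 1) * sigma.
Proof.
  intros Hns Hs Hsigma HW Hsvd j Hj.
  apply (svd_sig_le_perturbation _ _ _ _ _ (hankel W) (fun i => expi_seq (y i * (Omega / INR s))) n j _ Hsvd).
  - lia.
  - apply Rmult_le_pos; [apply pos_INR | auto].
  - intros x Hx p _. rewrite Mv_hankel_add, Mv_hankel_model by auto.
    unfold expi_sum, lincomb. rewrite Csum_zero; [ring|]. intros i Hi. rewrite Hx by auto. ring.
  - intros x. apply Mv_hankel_noise; auto.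
Qed.

(* [x = sum_i b_i conj(v_i)] has [|x|^2 = <b, w>] with [w_i = v_i^T x]. *)
Lemma vnorm2_lincomb_expi_le N n theta b :
  let x := lincomb n (fun i => expi_seq (- theta i)) b in
  vnorm2 N x <= sqrt (vnorm2 n b) *
                sqrt (vnorm2 n (fun i => Csum N (fun q => Cmul (expi_seq (theta i) q) (x q)))).
Proof.
  intros x. rewrite vnorm2_cdot. unfold x at 1. rewrite cdot_lincomb_l.
  eapply Rle_trans; [right | apply Re_cdot_le]. unfold cdot at 1 3. f_equal.
  apply Csum_ext; intros i _. f_equal. apply Csum_ext; intros q _.
  rewrite Cconj_expi_seq, Ropp_involutive. reflexivity.
Qed.

Lemma hankel_model_norm2_lower n s Omega mmin a y Q x :
  (1 <= n <= s)%nat -> 0 < Q -> 0 <= mmin ->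
  (forall j, (j < n)%nat -> 2 ^ (n - 1) * Q < node_gap n (fun k => y k * (Omega / INR s)) j) ->
  (forall j, (j < n)%nat -> mmin <= Cnorm (a j)) ->
  Q ^ 2 * (mmin ^ 2 *
    vnorm2 n (fun i => Csum (s + 1) (fun q => Cmul (expi_seq (y i * (Omega / INR s)) q) (x q)))) <=
  INR n * vnorm2 (s + 1) (Mv (s + 1) (hankel (fun t => model n a y (zpt Omega s t))) x).
Proof.
  intros Hn HQ Hm Hgap Ha.
  rewrite (vnorm2_ext _ _ _ (fun p _ => Mv_hankel_model n s Omega a y (s + 1) x p ltac:(lia))).
  eapply Rle_trans; [|apply (proj1 (expi_sum_norm2_lower n (s + 1) _ _ Q ltac:(lia) HQ Hgap))].
  apply Rmult_le_compat_l; [apply pow2_ge_0|].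
  unfold vnorm2. rewrite <- Rsum_scal. apply Rsum_le. intros i Hi.
  rewrite !Cnorm2_mul, Cnorm2_Cexpi, (Cnorm2_Cnorm (a i)), Rmult_1_r.
  apply Rmult_le_compat_r; [apply Cnorm2_nonneg|]. apply pow_incr. auto.
Qed.

Lemma hankel_model_norm2_le n s Omega sigma a y W x : 0 <= sigma ->
  (forall t, (1 <= t <= 2 * s + 1)%nat -> Cnorm (W t) <= sigma) ->
  vnorm2 (s + 1) (Mv (s + 1) (hankel (fun t => Cadd (model n a y (zpt Omega s t)) (W t))) x)
    <= (INR (s + 1) * sigma) ^ 2 * vnorm2 (s + 1) x ->
  vnorm2 (s + 1) (Mv (s + 1) (hankel (fun t => model n a y (zpt Omega s t))) x)
    <= 4 * (INR (s + 1) * sigma) ^ 2 * vnorm2 (s + 1) x.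
Proof.
  intros Hsigma HW Hx.
  rewrite (vnorm2_ext _ _
    (fun p => Csub (Mv (s + 1) (hankel (fun t => Cadd (model n a y (zpt Omega s t)) (W t))) x p)
                   (Mv (s + 1) (hankel W) x p))).
  - apply vnorm2_sub_le; auto using vnorm2_nonneg, Mv_hankel_noise.
    apply Rmult_le_pos; auto using pos_INR.
  - intros p _. rewrite Mv_hankel_add. unfold Csub. ring.
Qed.

(* If [sig (n-1) <= (s+1) sigma], some [x] in the span of the [conj v_i] has
   [|H x| <= (s+1) sigma |x|]; the Vandermonde bounds on its coefficients [b] and on
   [w = v^T x] then contradict [|x|^2 <= |b| |w|]. *)
Lemma hankel_sig_gt n s Omega sigma mmin a y W U V sig Q :
  (1 <= n <= s)%nat -> 0 < sigma -> 0 < mmin -> 0 < Q ->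
  Q ^ 2 = 2 * INR n * INR (s + 1) * sigma / mmin ->
  (forall j, (j < n)%nat -> 2 ^ (n - 1) * Q < node_gap n (fun k => y k * (Omega / INR s)) j) ->
  (forall j, (j < n)%nat -> mmin <= Cnorm (a j)) ->
  (forall t, (1 <= t <= 2 * s + 1)%nat -> Cnorm (W t) <= sigma) ->
  is_svd (s + 1) (hankel (fun t => Cadd (model n a y (zpt Omega s t)) (W t))) U sig V ->
  INR (s + 1) * sigma < sig (n - 1)%nat.
Proof.
  intros Hn Hsigma Hm HQ HQ2 Hgap Ha HW Hsvd.
  set (theta i := y i * (Omega / INR s)) in *. set (eps := INR (s + 1) * sigma).
  assert (Heps : 0 < eps) by (apply Rmult_lt_0_compat; [apply lt_0_INR; lia | auto]).
  assert (Hnr : 0 < INR n) by (apply lt_0_INR; lia).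
  apply Rnot_le_lt. intros Hsig.
  destruct (svd_small_vector_in_span (s + 1) _ U sig V n (fun i => expi_seq (- theta i)) Hsvd ltac:(lia))
    as [b [Hb Hsmall]].
  pose proof (vnorm2_lincomb_expi_le (s + 1) n theta b) as Hxbw.
  set (x := lincomb n (fun i => expi_seq (- theta i)) b) in *.
  set (w := fun i => Csum (s + 1) (fun q => Cmul (expi_seq (theta i) q) (x q))) in *.
  assert (Hbx : Q ^ 2 * vnorm2 n b < INR n * vnorm2 (s + 1) x).
  { apply (expi_sum_norm2_lower n (s + 1) (fun i => - theta i) b Q); auto; [lia|].
    intros j Hj. rewrite node_gap_opp. auto. }
  assert (Hw : Q ^ 2 * mmin ^ 2 * vnorm2 n w <= 4 * INR n * eps ^ 2 * vnorm2 (s + 1) x).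
  { rewrite Rmult_assoc. eapply Rle_trans;
      [exact (hankel_model_norm2_lower n s Omega mmin a y Q x ltac:(lia) HQ ltac:(lra) Hgap Ha)|].
    replace (4 * INR n * eps ^ 2 * vnorm2 (s + 1) x) with (INR n * (4 * eps ^ 2 * vnorm2 (s + 1) x)) by ring.
    apply Rmult_le_compat_l; [lra|]. apply (hankel_model_norm2_le _ _ _ _ _ _ W); [lra | auto |].
    eapply Rle_trans; [apply Hsmall|]. apply Rmult_le_compat_r; [apply vnorm2_nonneg|].
    apply pow_incr. split; auto. apply (svd_sig_nonneg _ _ _ _ _ Hsvd). lia. }
  change (vnorm2 (s + 1) x <= sqrt (vnorm2 n b) * sqrt (vnorm2 n w)) in Hxbw.
  apply (Rlt_irrefl (vnorm2 (s + 1) x)). eapply Rle_lt_trans; [apply Hxbw|].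
  assert (0 < Q ^ 2) by (apply pow_lt; lra). assert (0 < mmin ^ 2) by (apply pow_lt; lra).
  assert (0 < eps ^ 2) by (apply pow_lt; lra).
  apply (sqrt_mul_lt_of_bounds _ _ _ (Q ^ 2) (Q ^ 2 * mmin ^ 2) (INR n) (4 * INR n * eps ^ 2));
    try apply vnorm2_nonneg; auto; try nra.
  right. replace (Q ^ 2 * (Q ^ 2 * mmin ^ 2)) with ((Q ^ 2) ^ 2 * mmin ^ 2) by ring.
  rewrite HQ2. unfold eps. field. lra.
Qed.

Lemma Rpower_root_sq n X : (2 <= n)%nat -> 0 < X ->
  (Rpower X (1 / INR (2 * n - 2)) ^ (n - 1)) ^ 2 = X.
Proof.
  intros Hn HX. rewrite <- pow_mult. replace ((n - 1) * 2)%nat with (2 * n - 2)%nat by lia.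
  rewrite <- Rpower_pow by (unfold Rpower; apply exp_pos).
  rewrite Rpower_mult.
  replace (1 / INR (2 * n - 2) * INR (2 * n - 2)) with 1 by (field; apply not_0_INR; lia).
  apply Rpower_1; auto.
Qed.

Lemma hankel_node_gap n s Omega y R0 : (2 <= n <= s)%nat -> 0 < Omega -> 0 < R0 ->
  (forall j, (j < n)%nat ->
     - (INR (n - 1) * PI / (2 * Omega)) <= y j <= INR (n - 1) * PI / (2 * Omega)) ->
  (forall p j, (p < n)%nat -> (j < n)%nat -> p <> j -> Rabs (y p - y j) > PI * INR s / Omega * R0) ->
  forall j, (j < n)%nat ->
    2 ^ (n - 1) * (zeta n * R0 ^ (n - 1)) < node_gap n (fun k => y k * (Omega / INR s)) j.
Proof.
  intros Hn HO HR Hy Hsep j Hj. pose proof PI_RGT_0.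
  assert (Hs : 0 < INR s) by (apply lt_0_INR; lia).
  assert (Hns : INR (n - 1) < INR s) by (apply lt_INR; lia).
  replace (2 ^ (n - 1) * (zeta n * R0 ^ (n - 1)))
    with ((2 * (Omega / INR s) * (PI * INR s / Omega * R0) / PI) ^ (n - 1) * zeta n).
  2: { replace (2 * (Omega / INR s) * (PI * INR s / Omega * R0) / PI) with (2 * R0) by (field; lra).
       rewrite Rpow_mult_distr. ring. }
  apply node_gap_gt; [lia | | | | auto].
  - apply Rdiv_lt_0_compat; lra.
  - apply Rmult_lt_0_compat; auto. apply Rdiv_lt_0_compat; nra.
  - intros p k Hp Hk Hpk. split; [left; apply Hsep; auto|].
    assert (Hd : Rabs (y p - y k) <= INR (n - 1) * PI / Omega).
    { pose proof (Hy p Hp); pose proof (Hy k Hk). apply Rabs_le.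
      replace (INR (n - 1) * PI / Omega) with (2 * (INR (n - 1) * PI / (2 * Omega))) by (field; lra). lra. }
    apply Rle_lt_trans with (Omega / INR s * (INR (n - 1) * PI / Omega)).
    + apply Rmult_le_compat_l; auto. apply Rlt_le, Rdiv_lt_0_compat; lra.
    + replace (Omega / INR s * (INR (n - 1) * PI / Omega)) with (INR (n - 1) / INR s * PI) by (field; lra).
      assert (INR (n - 1) / INR s < 1) by (apply (Rmult_lt_reg_r (INR s)); auto; field_simplify; lra).
      nra.
Qed.

Theorem theorem5p1
  (n s : nat) (Omega sigma mmin : R) (a : nat -> cplx) (y : nat -> R)
  (W : nat -> cplx)
  (hn : (2 <= n)%nat) (hs : (n <= s)%nat)
  (hOmega : 0 < Omega) (hsigma : 0 < sigma) (hsm : sigma < mmin)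
  (hdist : forall p j, (p < n)%nat -> (j < n)%nat -> p <> j -> y p <> y j)
  (hy : forall j, (j < n)%nat ->
          - (INR (n - 1) * PI / (2 * Omega)) <= y j <= INR (n - 1) * PI / (2 * Omega))
  (hmin_le : forall j, (j < n)%nat -> mmin <= Cnorm (a j))
  (hmin_att : exists j, (j < n)%nat /\ Cnorm (a j) = mmin)
  (hW : forall t, (1 <= t <= 2 * s + 1)%nat -> Cnorm (W t) <= sigma) :
  let Y := fun t => Cadd (model n a y (zpt Omega s t)) (W t) in
  forall (U V : cmat) (sig : nat -> R),
    is_svd (s + 1) (hankel Y) U sig V ->
    (forall j, (n <= j <= s)%nat -> sig j <= INR (s + 1) * sigma) /\
    ((forall p j, (p < n)%nat -> (j < n)%nat -> p <> j ->
        Rabs (y p - y j) >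
          PI * INR s / Omega *
          Rpower (2 * INR n * INR (s + 1) / (zeta n) ^ 2 * (sigma / mmin))
                 (1 / INR (2 * n - 2))) ->
     sig (n - 1)%nat > INR (s + 1) * sigma).
Proof.
  intros Y U V sig Hsvd. split.
  - apply (hankel_sig_tail_le n s Omega sigma a y W U V sig); auto; [lia | lra].
  - intros Hsep.
    set (X := 2 * INR n * INR (s + 1) / zeta n ^ 2 * (sigma / mmin)) in Hsep.
    set (R0 := Rpower X (1 / INR (2 * n - 2))) in Hsep.
    assert (Hz : 0 < zeta n) by (apply zeta_pos; lia).
    assert (HX : 0 < X).
    { unfold X. apply Rmult_lt_0_compat; [|apply Rdiv_lt_0_compat; lra].
      apply Rdiv_lt_0_compat; [|apply pow_lt; auto].
      apply Rmult_lt_0_compat; [apply Rmult_lt_0_compat; [lra|] | ]; apply lt_0_INR; lia. }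
    assert (HR0 : 0 < R0) by apply exp_pos.
    apply (hankel_sig_gt n s Omega sigma mmin a y W U V sig (zeta n * R0 ^ (n - 1))); auto; try lia; try lra.
    + apply Rmult_lt_0_compat; auto. apply pow_lt; auto.
    + rewrite Rpow_mult_distr. unfold R0. rewrite Rpower_root_sq by auto. unfold X. field. split; lra.
    + apply hankel_node_gap; auto.
Qed.
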